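(* Let $R_0^*\in SO(3)$ with unit quaternion representation $w_0^*\in\mathbb{S}^3$, let $1\le k^*<\ell$ (there is at least one outlier; $k^*$ may be such that the inlier set is $\{1,\dots,k^*\}$), let $(y_i,x_i)\in\mathbb{R}^3\times\mathbb{R}^3$ with $y_i=R_0^*x_i$ for $i=1,\dots,k^*$ (noiseless inliers) and $(y_j,x_j)$ arbitrary for $j=k^*+1,\dots,\ell$ (outliers), and let $c_1^2,\dots,c_\ell^2\ge0$. Let $\omega^*=[w_0^*;\dots;w_0^*;0;\dots;0]\in\mathbb{R}^{4(\ell+1)}$, where $w_0^*$ appears $k^*+1$ times followed by zero blocks, and $\mathcal{W}^*=\omega^*(\omega^* )^\top$. Then: (1) If $0<c_j^2<\lambda_{\min}(Q_j)$ for all $j=k^*+1,\dots,\ell$, then (SDR) is tight, admitting $\mathcal{W}^*$ as a global minimizer. (2) If $c_j^2>(w_0^* )^\top Q_jw_0^*$ for some $j\in\{k^*+1,\dots,\ell\}$, then $\mathcal{W}^*$ is not a global minimizer of (SDR).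
   Context: For $w=[w_1;w_2;w_3;w_4]\in\mathbb{S}^3$, $R(w)=\begin{bmatrix} w_1^2+w_2^2-w_3^2-w_4^2 & 2(w_2w_3-w_1w_4) & 2(w_2w_4+w_1w_3)\\ 2(w_2w_3+w_1w_4) & w_1^2+w_3^2-w_2^2-w_4^2 & 2(w_3w_4-w_1w_2)\\ 2(w_2w_4-w_1w_3) & 2(w_3w_4+w_1w_2) & w_1^2+w_4^2-w_2^2-w_3^2\end{bmatrix}\in SO(3)$; $\pm w$ are the unit quaternion representations of $R(w)$. $Q_i$ is the unique symmetric $4\times4$ matrix with $w^\top Q_iw=\|y_i-R(w)x_i\|_2^2$ for all $w\in\mathbb{S}^3$; $\lambda_{\min}$ is the smallest eigenvalue. For $\mathcal{A}\in\mathbb{R}^{4(\ell+1)\times4(\ell+1)}$, $[\mathcal{A}]_{ij}$ ($0\le i,j\le\ell$) is the $4\times4$ block in rows $4i+1..4i+4$, columns $4j+1..4j+4$. $\mathcal{Q}$ is symmetric with $[\mathcal{Q}]_{0i}=[\mathcal{Q}]_{i0}=\frac12(Q_i-c_i^2I_4)$ ($i\ge1$), other blocks zero. (QCQP): minimize $\operatorname{tr}(\mathcal{Q}\omega\omega^\top)+\sum_ic_i^2$ over $\omega\in\mathbb{R}^{4(\ell+1)}$ s.t. $[\omega\omega^\top]_{0i}=[\omega\omega^\top]_{ii}$ ($i=1..\ell$), $\operatorname{tr}([\omega\omega^\top]_{00})=1$. (SDR): minimize $\operatorname{tr}(\mathcal{Q}\mathcal{W})+\sum_ic_i^2$ over symmetric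 $\mathcal{W}\succeq0$ s.t. $[\mathcal{W}]_{0i}=[\mathcal{W}]_{ii}$ ($i=1..\ell$), $\operatorname{tr}([\mathcal{W}]_{00})=1$. (SDR) is tight if it admits $\hat\omega\hat\omega^\top$ as a global minimizer, where $\hat\omega$ is a global minimizer of (QCQP). *)

From HB Require Import structures.
From mathcomp Require Import all_boot all_order all_algebra.
From mathcomp Require Import classical_sets reals.
Set Implicit Arguments. Unset Strict Implicit. Unset Printing Implicit Defensive.
Import Order.TTheory GRing.Theory Num.Theory.
Local Open Scope ring_scope.

Section Defs.
Variable R : realType.

(* entry of a matrix at nat indices (0 if out of range) *)
Definition entry m n (A : 'M[R]_(m, n)) (a b : nat) : R :=
  match @insub nat (fun x => x < m)%N 'I_m a, @insub nat (fun x => x < n)%N 'I_n b with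
  | Some a', Some b' => A a' b'
  | _, _ => 0
  end.

(* [A]_{ij}: rows 4i+1..4i+4, columns 4j+1..4j+4 (0-based: 4i..4i+3) *)
Definition blk n (A : 'M[R]_n) (i j : nat) : 'M[R]_4 :=
  \matrix_(r < 4, s < 4) entry A (4 * i + r) (4 * j + s).

Definition sqnorm n (v : 'cV[R]_n) : R := (v^T *m v) 0 0.
Definition qform n (A : 'M[R]_n) (v : 'cV[R]_n) : R := (v^T *m A *m v) 0 0.

Definition unit_quat (w : 'cV[R]_4) : Prop := sqnorm w = 1.

Definition rotq (w : 'cV[R]_4) : 'M[R]_3 :=
  let w1 := w 0 0 in let w2 := w 1 0 in let w3 := w 2%:R 0 in let w4 := w 3%:R 0 in
  \matrix_(i < 3, j < 3) (nth [::]
   [:: [:: w1^+2 + w2^+2 - w3^+2 - w4^+2; 2 * (w2 * w3 - w1 * w4); 2 * (w2 * w4 + w1 * w3)];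
       [:: 2 * (w2 * w3 + w1 * w4); w1^+2 + w3^+2 - w2^+2 - w4^+2; 2 * (w3 * w4 - w1 * w2)];
       [:: 2 * (w2 * w4 - w1 * w3); 2 * (w3 * w4 + w1 * w2); w1^+2 + w4^+2 - w2^+2 - w3^+2]] i)`_j.

Definition psd n (A : 'M[R]_n) : Prop := forall v : 'cV[R]_n, 0 <= qform A v.

Definition lambda_min n (A : 'M[R]_n) : R := inf [set a : R | eigenvalue A a].

Definition omega_star (l k : nat) (w0 : 'cV[R]_4) : 'cV[R]_(4 * l.+1) :=
  \col_(a < 4 * l.+1) (if (a %/ 4 <= k)%N then entry w0 (a %% 4) 0 else 0).

Section Problems.
Variables (l : nat) (calQ : 'M[R]_(4 * l.+1)) (c2 : nat -> R).

Definition objective (W : 'M[R]_(4 * l.+1)) : R :=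
  \tr (calQ *m W) + \sum_(1 <= i < l.+1) c2 i.

Definition sdr_feasible (W : 'M[R]_(4 * l.+1)) : Prop :=
  W^T = W /\ psd W /\
  (forall i, (1 <= i <= l)%N -> blk W 0 i = blk W i i) /\
  \tr (blk W 0 0) = 1.

Definition qcqp_feasible (om : 'cV[R]_(4 * l.+1)) : Prop :=
  (forall i, (1 <= i <= l)%N -> blk (om *m om^T) 0 i = blk (om *m om^T) i i) /\
  \tr (blk (om *m om^T) 0 0) = 1.

Definition sdr_global_min (W : 'M[R]_(4 * l.+1)) : Prop :=
  sdr_feasible W /\ forall W', sdr_feasible W' -> objective W <= objective W'.

Definition qcqp_global_min (om : 'cV[R]_(4 * l.+1)) : Prop :=
  qcqp_feasible om /\
  forall om', qcqp_feasible om' -> objective (om *m om^T) <= objective (om' *m om'^T).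

Definition sdr_tight : Prop :=
  exists om, qcqp_global_min om /\ sdr_global_min (om *m om^T).
End Problems.
End Defs.

(* For an SDR-feasible W, the coupling constraints [W]_0i = [W]_ii reduce the
   objective to the sum over i of tr((Q_i - c_i^2 I) [W]_ii) + c_i^2, where
   every [W]_ii is positive semidefinite with trace at most tr [W]_00 = 1.
   Since tr(AB) >= 0 for positive semidefinite A and B, an inlier term is
   >= 0 (Q_i is PSD) and an outlier term is >= c_j^2 as soon as
   c_j^2 <= lambda_min(Q_j), i.e. Q_j - c_j^2 I is PSD.  W* meets all these
   bounds, because w0^T Q_i w0 = |y_i - R(w0) x_i|^2 = 0 on noiseless inliers,
   so it is optimal, and being a rank-one outer product it makes the
   relaxation tight.  Conversely, copying w0 into the block of an outlier j
   keeps feasibility and replaces the term c_j^2 by w0^T Q_j w0. *)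

From HB Require Import structures.
From mathcomp Require Import all_boot all_order all_algebra.
From mathcomp Require Import classical_sets reals.
From mathcomp Require Import ring lra zify.
Import Order.TTheory GRing.Theory Num.Theory.
Set Implicit Arguments. Unset Strict Implicit. Unset Printing Implicit Defensive.
Local Open Scope ring_scope.

Section Blocks.
Variable R : realType.

Lemma entry_ord m n (A : 'M[R]_(m, n)) (i : 'I_m) (j : 'I_n) : entry A i j = A i j.
Proof. by rewrite /entry !valK. Qed.

Lemma entry0 m n a b : entry (0 : 'M[R]_(m, n)) a b = 0.
Proof.
rewrite /entry; case: insubP => [a' _ _|_] //; case: insubP => [b' _ _|_] //.
by rewrite mxE.
Qed.

Lemma entry_trmx n (A : 'M[R]_n) a b : entry A^T a b = entry A b a.
Proof.
rewrite /entry; case: insubP => [a' _ _|_] //; case: insubP => [b' _ _|_] //.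
by rewrite mxE.
Qed.

Lemma blk_trmx n (A : 'M[R]_n) p q : blk A^T p q = (blk A q p)^T.
Proof. by apply/matrixP => r s; rewrite !mxE entry_trmx. Qed.

Lemma blk_sym n (W : 'M[R]_n) p q : W^T = W -> (blk W p q)^T = blk W q p.
Proof. by move=> sW; rewrite -blk_trmx sW. Qed.

Lemma sum_ord_blocks m L (F : nat -> R) :
  \sum_(a < m * L) F a = \sum_(p < L) \sum_(r < m) F (m * p + r)%N.
Proof.
elim: L => [|L IH]; first by rewrite muln0 !big_ord0.
rewrite [RHS]big_ord_recr /= -IH -!(big_mkord xpredT).
rewrite (big_cat_nat _ (n := (m * L)%N)) /=; [|lia|lia].
congr (_ + _); rewrite -{1}[(m * L)%N]add0n big_addn.
have -> : (m * L.+1 - m * L = m)%N by lia.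
by rewrite big_mkord; apply: eq_bigr => r _; rewrite addnC.
Qed.

Lemma sum_ord_delta L (F : nat -> R) i : (i < L)%N ->
  \sum_(p < L) ((p : nat) == i)%:R * F p = F i.
Proof.
move=> iL; rewrite (bigD1 (Ordinal iL)) //= eqxx mul1r big1 ?addr0 // => p pi.
by rewrite (_ : _ == i = false) ?mul0r //; apply: contraNF pi => /eqP pi; apply/eqP/val_inj.
Qed.

Lemma sum_ord_delta2 L (F : nat -> R) i j : (i < L)%N -> (j < L)%N ->
  \sum_(p < L) (((p : nat) == i)%:R - ((p : nat) == j)%:R) * F p = F i - F j.
Proof.
move=> iL jL; under eq_bigr do rewrite mulrBl.
by rewrite sumrB !sum_ord_delta.
Qed.

Lemma mxtrace_blocks L (A B : 'M[R]_(4 * L)) :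
  \tr (A *m B) = \sum_(p < L) \sum_(q < L) \tr (blk A p q *m blk B q p).
Proof.
pose F (a b : nat) := entry A a b * entry B b a.
transitivity (\sum_(a < 4 * L) \sum_(b < 4 * L) F a b).
  by apply: eq_bigr => a _; rewrite mxE; apply: eq_bigr => b _; rewrite /F !entry_ord.
rewrite (sum_ord_blocks _ _ (fun a => \sum_(b < 4 * L) F a b)); apply: eq_bigr => p _.
under eq_bigr do rewrite (sum_ord_blocks _ _ (F _)).
rewrite exchange_big; apply: eq_bigr => q _.
by apply: eq_bigr => r _; rewrite !mxE; apply: eq_bigr => s _; rewrite !mxE.
Qed.

Definition stack L (v : nat -> 'cV[R]_4) : 'cV[R]_(4 * L) :=
  \col_(a < 4 * L) entry (v (a %/ 4)%N) (a %% 4)%N 0.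

Lemma blk_stack_outer L (v : nat -> 'cV[R]_4) p q : (p < L)%N -> (q < L)%N ->
  blk (stack L v *m (stack L v)^T) p q = v p *m (v q)^T.
Proof.
move=> pL qL; apply/matrixP => r s; rewrite !mxE.
have rL : (4 * p + r < 4 * L)%N by have := ltn_ord r; lia.
have sL : (4 * q + s < 4 * L)%N by have := ltn_ord s; lia.
have divE t (u : 'I_4) : ((4 * t + u) %/ 4 = t)%N.
  by rewrite mulnC divnMDl // divn_small // addn0.
have modE t (u : 'I_4) : ((4 * t + u) %% 4 = u)%N by rewrite mulnC modnMDl modn_small.
rewrite (entry_ord _ (Ordinal rL) (Ordinal sL)) !mxE !big_ord1 !mxE /=.
by rewrite !divE !modE !(entry_ord _ _ ord0).
Qed.

End Blocks.

Section Forms.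
Variable R : realType.

Definition bform n (M : 'M[R]_n) (u v : 'cV[R]_n) : R := (u^T *m M *m v) 0 0.

Lemma qformE n (M : 'M[R]_n) v : qform M v = bform M v v.
Proof. by []. Qed.

Lemma bformDl n (M : 'M[R]_n) u v w : bform M (u + v) w = bform M u w + bform M v w.
Proof. by rewrite /bform linearD /= !mulmxDl mxE. Qed.

Lemma bformDr n (M : 'M[R]_n) u v w : bform M u (v + w) = bform M u v + bform M u w.
Proof. by rewrite /bform !mulmxDr mxE. Qed.

Lemma bformZl n (M : 'M[R]_n) a u v : bform M (a *: u) v = a * bform M u v.
Proof. by rewrite /bform linearZ /= -!scalemxAl mxE. Qed.

Lemma bformZr n (M : 'M[R]_n) a u v : bform M u (a *: v) = a * bform M u v.
Proof. by rewrite /bform -scalemxAr mxE. Qed.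

Lemma bform_trmx n (M : 'M[R]_n) u v : bform M^T u v = bform M v u.
Proof.
rewrite /bform; transitivity ((u^T *m M^T *m v)^T 0 0); first by rewrite [RHS]mxE.
by rewrite !trmx_mul !trmxK mulmxA.
Qed.

Lemma bformC n (M : 'M[R]_n) u v : M^T = M -> bform M u v = bform M v u.
Proof. by move=> sM; rewrite -bform_trmx sM. Qed.

Lemma bform_delta n (M : 'M[R]_n) i j : bform M (delta_mx i 0) (delta_mx j 0) = M i j.
Proof. by rewrite /bform trmx_delta -rowE -colE !mxE. Qed.

Lemma qformZ n (M : 'M[R]_n) a v : qform M (a *: v) = a ^+ 2 * qform M v.
Proof. by rewrite !qformE bformZl bformZr mulrA expr2. Qed.

Lemma qform0 n (M : 'M[R]_n) : qform M 0 = 0.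
Proof. by rewrite -(scale0r 0) qformZ expr0n mul0r. Qed.

Lemma qformB n (M N : 'M[R]_n) v : qform (M - N) v = qform M v - qform N v.
Proof. by rewrite /qform mulmxBr mulmxBl mxE [X in _ + X]mxE. Qed.

Lemma qform_trmx n (M : 'M[R]_n) v : qform M^T v = qform M v.
Proof. exact: bform_trmx. Qed.

Lemma qform_scalar n a (v : 'cV[R]_n) : qform a%:M v = a * sqnorm v.
Proof. by rewrite /qform mul_mx_scalar -scalemxAl mxE. Qed.

Lemma qform_mxtrace n (M : 'M[R]_n) z : qform M z = \tr (M *m (z *m z^T)).
Proof. by rewrite /qform mulmxA mxtrace_mulC mulmxA /mxtrace big_ord1. Qed.

Lemma qform_outer n (z v : 'cV[R]_n) : qform (z *m z^T) v = ((z^T *m v) 0 0) ^+ 2.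
Proof.
rewrite /qform !mulmxA -mulmxA mxE big_ord1 expr2; congr (_ * _).
by transitivity ((v^T *m z)^T 0 0); [rewrite [RHS]mxE | rewrite trmx_mul trmxK].
Qed.

Lemma discriminant_le (a b c : R) : 0 <= c ->
  (forall t, 0 <= a + 2 * b * t + c * t ^+ 2) -> b ^+ 2 <= a * c.
Proof.
move=> c_ge0 nonneg; case: (ltrgtP c 0) => [|c_gt0|c0]; first by rewrite ltNge c_ge0.
  have ct : c * (- b / c) = - b by rewrite mulrCA divff ?mulr1 ?gt_eqF.
  by have := nonneg (- b / c); move: ct; nra.
rewrite c0 mulr0; case: (eqVneq b 0) => [->|b_neq0]; first by rewrite expr0n.
have bt : 2 * b * (- (a + 1) / (2 * b)) = - (a + 1).
  by rewrite mulrCA divff ?mulr1 // mulf_neq0 // pnatr_eq0.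
by have := nonneg (- (a + 1) / (2 * b)); rewrite c0 mul0r addr0 bt; lra.
Qed.

Lemma psd_cauchy_schwarz n (M : 'M[R]_n) u v : M^T = M -> psd M ->
  bform M u v ^+ 2 <= qform M u * qform M v.
Proof.
move=> sM pM; rewrite mulrC; apply: discriminant_le => [|t]; first exact: pM.
have := pM (v + t *: u).
by rewrite qformE bformDl !bformDr !bformZl !bformZr (bformC u v sM) !qformE; lra.
Qed.

Lemma qform_stack L (W : 'M[R]_(4 * L)) v :
  qform W (stack L v) = \sum_(p < L) \sum_(q < L) bform (blk W p q) (v p) (v q).
Proof.
rewrite qform_mxtrace mxtrace_blocks; apply: eq_bigr => p _; apply: eq_bigr => q _.
by rewrite blk_stack_outer // mulmxA mxtrace_mulC mulmxA /mxtrace big_ord1.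
Qed.

Lemma qform_stackZ L (W : 'M[R]_(4 * L)) (a : nat -> R) u :
  qform W (stack L (fun p => a p *: u)) =
  \sum_(p < L) a p * \sum_(q < L) a q * qform (blk W p q) u.
Proof.
rewrite qform_stack; apply: eq_bigr => p _; rewrite mulr_sumr; apply: eq_bigr => q _.
by rewrite bformZl bformZr.
Qed.

End Forms.

Section Psd.
Variable R : realType.

Lemma qform_scalemx n a (M : 'M[R]_n) v : qform (a *: M) v = a * qform M v.
Proof. by rewrite /qform -scalemxAr -scalemxAl mxE. Qed.

Lemma sqnorm_qform n (v : 'cV[R]_n) : sqnorm v = qform 1%:M v.
Proof. by rewrite qform_scalar mul1r. Qed.

Lemma sqnormZ n a (v : 'cV[R]_n) : sqnorm (a *: v) = a ^+ 2 * sqnorm v.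
Proof. by rewrite !sqnorm_qform qformZ. Qed.

Lemma sqnorm_delta n (i : 'I_n) : sqnorm (delta_mx i 0 : 'cV[R]_n) = 1.
Proof. by rewrite sqnorm_qform qformE bform_delta mxE eqxx. Qed.

Lemma sqnormE n (v : 'cV[R]_n) : sqnorm v = \sum_i v i 0 ^+ 2.
Proof. by rewrite /sqnorm mxE; apply: eq_bigr => i _; rewrite mxE expr2. Qed.

Lemma sqnorm_ge0 n (v : 'cV[R]_n) : 0 <= sqnorm v.
Proof. by rewrite sqnormE sumr_ge0 // => i _; rewrite sqr_ge0. Qed.

Lemma sqnorm_gt0 n (v : 'cV[R]_n) : (0 < sqnorm v) = (v != 0).
Proof.
rewrite lt_def sqnorm_ge0 andbT; congr negb; apply/eqP/eqP => [|->].
  rewrite sqnormE => /psumr_eq0P v0; apply/matrixP => i j.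
  by rewrite ord1 mxE; apply/eqP; rewrite -sqrf_eq0 v0 // => k _; rewrite sqr_ge0.
by rewrite sqnorm_qform qform0.
Qed.

Lemma normalize_cV n (v : 'cV[R]_n) : v != 0 ->
  exists2 t, 0 < t & exists2 u, sqnorm u = 1 & v = t *: u.
Proof.
rewrite -sqnorm_gt0 => v_gt0; have t_gt0 : 0 < Num.sqrt (sqnorm v) by rewrite sqrtr_gt0.
exists (Num.sqrt (sqnorm v)) => //; exists ((Num.sqrt (sqnorm v))^-1 *: v).
  by rewrite sqnormZ exprVn sqr_sqrtr ?ltW // mulVf ?gt_eqF.
by rewrite scalerA divff ?scale1r ?gt_eqF.
Qed.

Lemma psd_sphere n (A : 'M[R]_n) :
  (forall w, sqnorm w = 1 -> 0 <= qform A w) -> psd A.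
Proof.
move=> A_ge0 v; have [->|/normalize_cV[t _ [u u1 ->]]] := eqVneq v 0.
  by rewrite qform0.
by rewrite qformZ mulr_ge0 ?sqr_ge0 ?A_ge0.
Qed.

Lemma psd_diag n (A : 'M[R]_n) i : psd A -> 0 <= A i i.
Proof. by move=> pA; have := pA (delta_mx i 0); rewrite qformE bform_delta. Qed.

Lemma mxtrace_psd_ge0 n (A : 'M[R]_n) : psd A -> 0 <= \tr A.
Proof. by move=> pA; rewrite sumr_ge0 // => i _; rewrite psd_diag. Qed.

Lemma psd_diag0_row n (A : 'M[R]_n) i j : A^T = A -> psd A -> A i i = 0 -> A i j = 0.
Proof.
move=> sA pA Aii0; have := psd_cauchy_schwarz (delta_mx i 0) (delta_mx j 0) sA pA.
rewrite !qformE !bform_delta Aii0 mul0r => sq_le0.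
by apply/eqP; rewrite -sqrf_eq0 eq_le sq_le0 sqr_ge0.
Qed.

Lemma psd_outer n (z : 'cV[R]_n) : psd (z *m z^T).
Proof. by move=> v; rewrite qform_outer sqr_ge0. Qed.

(* One step of symmetric Gaussian elimination; the Schur complement stays
   positive semidefinite by Cauchy-Schwarz. *)
Lemma psd_elim_step n (A : 'M[R]_n) i0 : A^T = A -> psd A -> 0 < A i0 i0 ->
  let S := A - (A i0 i0)^-1 *: (col i0 A *m (col i0 A)^T) in
  [/\ S^T = S, psd S, forall j, S i0 j = 0
    & forall i, (forall j, A i j = 0) -> forall j, S i j = 0].
Proof.
move=> sA pA a_gt0 S.
have symA i j : A i j = A j i by rewrite -[in LHS]sA mxE.
have SE i j : S i j = A i j - (A i0 i0)^-1 * (A i i0 * A j i0).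
  by rewrite !mxE big_ord1 !mxE.
split=> [||j|i Ai0 j].
- by rewrite /S linearB /= linearZ /= trmx_mul trmxK sA.
- move=> v; rewrite qformB qform_scalemx qform_outer subr_ge0 ler_pdivrMl //.
  have -> : ((col i0 A)^T *m v) 0 0 = bform A (delta_mx i0 0) v.
    by rewrite tr_col sA rowE /bform trmx_delta.
  by have := psd_cauchy_schwarz (delta_mx i0 0) v sA pA; rewrite qformE bform_delta.
- by rewrite SE mulrA mulVf ?gt_eqF // mul1r symA subrr.
- by rewrite SE !Ai0 mul0r mulr0 subr0.
Qed.

Lemma mxtrace_mul_psd_ge0 n (A B : 'M[R]_n) :
  A^T = A -> psd A -> psd B -> 0 <= \tr (A *m B).
Proof.
(* Peel off one row at a time with [psd_elim_step]: each peeled rank-one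
   piece contributes a quadratic form of [B]. *)
move=> + + pB; suff: forall k (A : 'M[R]_n), A^T = A -> psd A ->
    (forall i j : 'I_n, (k <= i)%N -> A i j = 0) -> 0 <= \tr (A *m B).
  by move=> /(_ n A) ge0 sA pA; apply: ge0 => // i j; rewrite leqNgt ltn_ord.
elim=> [|k IH] {}A sA pA Asupp.
  have -> : A = 0 by apply/matrixP => i j; rewrite mxE Asupp.
  by rewrite mul0mx mxtrace0.
have [kn|nk] := ltnP k n; last by apply: IH => // i j; have := ltn_ord i; lia.
pose i0 := Ordinal kn.
have IHk (M : 'M[R]_n) : M^T = M -> psd M -> (forall j, M i0 j = 0) ->
    (forall i j : 'I_n, (k < i)%N -> M i j = 0) -> 0 <= \tr (M *m B).
  move=> sM pM Mi0 Msupp; apply: IH => // i j; rewrite leq_eqVlt => /orP[/eqP ki|].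
    by rewrite (_ : i = i0) ?Mi0 //; apply: val_inj.
  exact: Msupp.
have [Ai0i0|Ai0i0] := eqVneq (A i0 i0) 0.
  by apply: IHk => // j; apply: psd_diag0_row.
have a_gt0 : 0 < A i0 i0 by rewrite lt_def Ai0i0 psd_diag.
have [sS pS Si0 Ssupp] := psd_elim_step sA pA a_gt0.
rewrite -[A](subrK ((A i0 i0)^-1 *: (col i0 A *m (col i0 A)^T))).
rewrite mulmxDl mxtraceD -scalemxAl mxtraceZ addr_ge0 ?mulr_ge0 //.
- by apply: IHk => // i j /Asupp Ai; apply: Ssupp.
- by rewrite invr_ge0 ltW.
- by rewrite mxtrace_mulC -qform_mxtrace.
Qed.

End Psd.

Section SmallestEigenvalue.
Variable R : realType.

Definition mxnorm1 n (M : 'M[R]_n) : R := \sum_i \sum_j `|M i j|.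

Lemma mxnorm1_ge0 n (M : 'M[R]_n) : 0 <= mxnorm1 M.
Proof. by rewrite !sumr_ge0 // => i _; rewrite sumr_ge0. Qed.

Lemma normr_mul_le_sqnorm n (v : 'cV[R]_n) i j : `|v i 0 * v j 0| <= sqnorm v.
Proof.
have sq_le k : `|v k 0| ^+ 2 <= sqnorm v.
  rewrite real_normK ?num_real // sqnormE (bigD1 k) //= lerDl.
  by rewrite sumr_ge0 // => l _; rewrite sqr_ge0.
have := sq_le i; have := sq_le j; rewrite normrM.
by have := normr_ge0 (v i 0); have := normr_ge0 (v j 0); nra.
Qed.

Lemma normr_qform_le n (M : 'M[R]_n) v : `|qform M v| <= mxnorm1 M * sqnorm v.
Proof.
have -> : qform M v = \sum_i \sum_j v i 0 * M i j * v j 0.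
  rewrite /qform mxE exchange_big /=; apply: eq_bigr => j _.
  by rewrite mxE mulr_suml; apply: eq_bigr => i _; rewrite mxE.
rewrite mulr_suml; apply: (le_trans (ler_norm_sum _ _ _)); apply: ler_sum => i _.
rewrite mulr_suml; apply: (le_trans (ler_norm_sum _ _ _)); apply: ler_sum => j _.
by rewrite mulrAC normrM mulrC ler_wpM2l ?normr_ge0 ?normr_mul_le_sqnorm.
Qed.

(* Cauchy-Schwarz against [P^-1 v] bounds [qform P] from below on the sphere. *)
Lemma psd_unitmx_coercive n (P : 'M[R]_n) : P^T = P -> psd P -> P \in unitmx ->
  exists2 e, 0 < e & forall v, sqnorm v = 1 -> e <= qform P v.
Proof.
move=> sP pP uP; pose K := mxnorm1 (invmx P) + 1.
have K_gt0 : 0 < K by rewrite ltr_wpDl ?mxnorm1_ge0.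
exists K^-1 => [|v v1]; first by rewrite invr_gt0.
have Pv : bform P v (invmx P *m v) = 1.
  by rewrite /bform mulmxA -(mulmxA v^T) mulmxV // mulmx1.
have PPv : qform P (invmx P *m v) = qform (invmx P) v.
  rewrite -[RHS]qform_trmx /qform trmx_mul -!mulmxA (mulmxA P) mulmxV //.
  by rewrite mul1mx.
have := psd_cauchy_schwarz v (invmx P *m v) sP pP; rewrite Pv PPv expr1n.
have := ler_normlW (normr_qform_le (invmx P) v); rewrite v1 mulr1.
rewrite -[K^-1]mulr1 ler_pdivrMl // /K; have := pP v; nra.
Qed.

Definition rayleigh_inf n (Q : 'M[R]_n) : R :=
  inf (qform Q @` [set v | sqnorm v = 1]).

Lemma rayleigh_inf_le n (Q : 'M[R]_n) v : rayleigh_inf Q * sqnorm v <= qform Q v.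
Proof.
have lb : has_lbound (qform Q @` [set v | sqnorm v = 1]).
  exists (- mxnorm1 Q) => _ [w /= w1 <-]; apply: lerNnormlW.
  by have := normr_qform_le Q w; rewrite w1 mulr1.
have [->|/normalize_cV[t _ [u u1 ->]]] := eqVneq v 0.
  by rewrite qform0 sqnorm_qform qform0 mulr0.
rewrite qformZ sqnormZ u1 mulr1 mulrC ler_wpM2l ?sqr_ge0 //.
by apply: ge_inf lb _ _; exists u.
Qed.

Lemma eigenvalue_rayleigh_inf n (Q : 'M[R]_n.+1) : Q^T = Q ->
  eigenvalue Q (rayleigh_inf Q).
Proof.
move=> sQ; set m := rayleigh_inf Q; pose P := Q - m%:M.
have sP : P^T = P by rewrite /P linearB /= sQ tr_scalar_mx.
have pP : psd P by move=> v; rewrite qformB qform_scalar subr_ge0 rayleigh_inf_le.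
(* An invertible [P] would be coercive and push the infimum above [m]. *)
have /det0P[v v0 vP] : \det P == 0.
  apply: contraT; rewrite -unitfE -unitmxE => /(psd_unitmx_coercive sP pP)[e e_gt0 Pe].
  have : m + e <= m.
    apply: lb_le_inf => [|_ [w /= w1 <-]].
      by exists (qform Q (delta_mx 0 0)), (delta_mx 0 0); rewrite /= ?sqnorm_delta.
    by rewrite -lerBrDl; have := Pe w w1; rewrite qformB qform_scalar w1 mulr1.
  by rewrite gerDl leNgt e_gt0.
apply/eigenvalueP; exists v => //.
by apply/eqP; rewrite -subr_eq0 -mul_mx_scalar -mulmxBr vP.
Qed.

Lemma lambda_min_le_qform n (Q : 'M[R]_n.+1) v : Q^T = Q ->
  lambda_min Q * sqnorm v <= qform Q v.
Proof.
move=> sQ; apply: le_trans (rayleigh_inf_le Q v); rewrite ler_wpM2r ?sqnorm_ge0 //.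
have lb : lbound [set a | eigenvalue Q a] (rayleigh_inf Q).
  move=> a /eigenvalueP[w wQ w0] /=.
  have w_gt0 : 0 < sqnorm w^T by rewrite sqnorm_gt0 trmx_eq0.
  have := rayleigh_inf_le Q w^T; rewrite /qform trmxK wQ -scalemxAl mxE.
  by rewrite /sqnorm trmxK in w_gt0 *; rewrite ler_pM2r.
by apply: (ge_inf _ (eigenvalue_rayleigh_inf sQ)); exists (rayleigh_inf Q).
Qed.

Lemma psd_sub_scalar n (Q : 'M[R]_n.+1) c : Q^T = Q -> c <= lambda_min Q ->
  psd (Q - c%:M).
Proof.
move=> sQ c_le v; rewrite qformB qform_scalar subr_ge0.
by apply: le_trans (lambda_min_le_qform v sQ); rewrite ler_wpM2r ?sqnorm_ge0.
Qed.

End SmallestEigenvalue.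

Section Relaxation.
Variable R : realType.

Definition shifted_cost n (A : 'M[R]_n) (c : R) (D : 'M[R]_n) : R :=
  \tr ((A - c%:M) *m D) + c.

Lemma shifted_costE n (A D : 'M[R]_n) c :
  shifted_cost A c D = \tr (A *m D) + c * (1 - \tr D).
Proof. by rewrite /shifted_cost mulmxBl linearB /= mul_scalar_mx mxtraceZ; ring. Qed.

Lemma shifted_cost_ge0 n (A D : 'M[R]_n) c : A^T = A -> psd A -> 0 <= c ->
  psd D -> \tr D <= 1 -> 0 <= shifted_cost A c D.
Proof.
move=> sA pA c_ge0 pD trD; rewrite shifted_costE addr_ge0 ?mulr_ge0 ?subr_ge0 //.
exact: mxtrace_mul_psd_ge0.
Qed.

Lemma shifted_cost_ge n (A D : 'M[R]_n.+1) c : A^T = A -> c <= lambda_min A ->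
  psd D -> c <= shifted_cost A c D.
Proof.
move=> sA c_le pD; rewrite /shifted_cost lerDr.
apply: mxtrace_mul_psd_ge0 => //; last exact: psd_sub_scalar.
by rewrite linearB /= sA tr_scalar_mx.
Qed.

Lemma shifted_cost_outer n (A : 'M[R]_n) c w : sqnorm w = 1 ->
  shifted_cost A c (w *m w^T) = qform A w.
Proof. by move=> w1; rewrite /shifted_cost -qform_mxtrace qformB qform_scalar w1 mulr1 subrK. Qed.

Lemma shifted_cost0 n (A : 'M[R]_n) c : shifted_cost A c 0 = c.
Proof. by rewrite /shifted_cost mulmx0 mxtrace0 add0r. Qed.

Variables (l : nat) (calQ : 'M[R]_(4 * l.+1)) (c2 : nat -> R) (Q : nat -> 'M[R]_4).
Hypothesis calQ_0i : forall i, (1 <= i <= l)%N ->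
  blk calQ 0 i = 2^-1 *: (Q i - (c2 i)%:M) /\ blk calQ i 0 = 2^-1 *: (Q i - (c2 i)%:M).
Hypothesis calQ_else : blk calQ 0 0 = 0 /\
  forall i j, (1 <= i <= l)%N -> (1 <= j <= l)%N -> blk calQ i j = 0.

(* The coupling [W_0i = W_ii] merges the two halves [Q_i - c_i I] / 2 of
   block row and block column [i] into one term on the diagonal block. *)
Lemma objective_shifted_costs (W : 'M[R]_(4 * l.+1)) :
  W^T = W -> (forall i, (1 <= i <= l)%N -> blk W 0 i = blk W i i) ->
  objective calQ c2 W =
  \sum_(i < l) shifted_cost (Q i.+1) (c2 i.+1) (blk W i.+1 i.+1).
Proof.
move=> sW W0i; have [calQ00 calQij] := calQ_else.
rewrite /objective mxtrace_blocks big_ord_recl big_ord_recl /= calQ00 mul0mx mxtrace0 add0r.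
rewrite big_add1 /= big_mkord -!big_split /=; apply: eq_bigr => i _.
have il : (1 <= i.+1 <= l)%N by have := ltn_ord i; lia.
rewrite big_ord_recl big1 ?addr0 => [|q _]; last first.
  by rewrite calQij ?mul0mx ?mxtrace0 // lift0; have := ltn_ord q; lia.
rewrite /bump leq0n add1n; have [-> ->] := calQ_0i il.
rewrite -(blk_sym _ _ sW) W0i // blk_sym // -!scalemxAl !mxtraceZ /shifted_cost.
set t := \tr _; lra.
Qed.

Lemma sdr_feasible_diag_blk (W : 'M[R]_(4 * l.+1)) i : sdr_feasible W ->
  (1 <= i <= l)%N -> psd (blk W i i) /\ \tr (blk W i i) <= 1.
Proof.
move=> [sW [pW [W0i trW00]]] il; have iL : (i < l.+1)%N by lia.
have psd_ii : psd (blk W i i).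
  move=> u; have := pW (stack l.+1 (fun p => ((p : nat) == i)%:R *: u)).
  rewrite qform_stackZ; under eq_bigr do rewrite (sum_ord_delta (fun q => qform (blk W _ q) u)) //.
  by rewrite (sum_ord_delta (fun p => qform (blk W p i) u)).
split=> //; rewrite -subr_ge0 -trW00 -linearB; apply: mxtrace_psd_ge0 => u.
have := pW (stack l.+1 (fun p => (((p : nat) == 0%N)%:R - ((p : nat) == i)%:R) *: u)).
rewrite qform_stackZ.
under eq_bigr do rewrite (sum_ord_delta2 (fun q => qform (blk W _ q) u)) //.
rewrite (sum_ord_delta2 (fun p => qform (blk W p 0) u - qform (blk W p i) u)) //.
rewrite -(blk_sym 0 i sW) qform_trmx W0i // qformB; lra.
Qed.

Definition select_stack (w : 'cV[R]_4) (s : nat -> bool) : 'cV[R]_(4 * l.+1) :=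
  stack l.+1 (fun p => if s p then w else 0).

Lemma omega_star_select k w : omega_star l k w = select_stack w (fun p => (p <= k)%N).
Proof. by apply/matrixP => a b; rewrite !mxE; case: ifP => // _; rewrite entry0. Qed.

Lemma sdr_feasible_select (w : 'cV[R]_4) (s : nat -> bool) : sqnorm w = 1 -> s 0%N ->
  sdr_feasible (select_stack w s *m (select_stack w s)^T).
Proof.
move=> w1 s0; split; first by rewrite trmx_mul trmxK.
split; first exact: psd_outer.
split=> [i il|]; last by rewrite blk_stack_outer // s0 mxtrace_mulC /mxtrace big_ord1.
have iL : (i < l.+1)%N by lia.
by rewrite !blk_stack_outer ?s0 //; case: (s i); rewrite ?trmx0 ?mulmx0 ?mul0mx.
Qed.

Lemma objective_select (w : 'cV[R]_4) (s : nat -> bool) : sqnorm w = 1 -> s 0%N ->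
  objective calQ c2 (select_stack w s *m (select_stack w s)^T) =
  \sum_(i < l) (if s i.+1 then qform (Q i.+1) w else c2 i.+1).
Proof.
move=> w1 s0; have [sW [_ [W0i _]]] := sdr_feasible_select w1 s0.
rewrite objective_shifted_costs //; apply: eq_bigr => i _.
rewrite blk_stack_outer ?ltnS ?ltn_ord //.
by case: (s _); [exact: shifted_cost_outer | rewrite mul0mx shifted_cost0].
Qed.

Lemma sdr_global_min_select (w : 'cV[R]_4) (s : nat -> bool) :
  sqnorm w = 1 -> s 0%N ->
  (forall i, (1 <= i <= l)%N -> (Q i)^T = Q i) ->
  (forall i, (1 <= i <= l)%N -> s i -> [/\ psd (Q i), qform (Q i) w = 0 & 0 <= c2 i]) ->
  (forall i, (1 <= i <= l)%N -> ~~ s i -> c2 i <= lambda_min (Q i)) ->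
  sdr_global_min calQ c2 (select_stack w s *m (select_stack w s)^T).
Proof.
move=> w1 s0 sQ selected unselected; split=> [|W fW]; first exact: sdr_feasible_select.
have [sW [_ [W0i _]]] := fW.
rewrite objective_select // objective_shifted_costs //; apply: ler_sum => i _.
have il : (1 <= i.+1 <= l)%N by have := ltn_ord i; lia.
have [pD trD] := sdr_feasible_diag_blk fW il.
case: ifP => [/(selected _ il)[pQ -> c_ge0] | /negbT/(unselected _ il) c_le].
  exact: shifted_cost_ge0 (sQ _ il) pQ c_ge0 pD trD.
exact: shifted_cost_ge (sQ _ il) c_le pD.
Qed.

Lemma objective_select_add (w : 'cV[R]_4) (s : nat -> bool) j :
  sqnorm w = 1 -> s 0%N -> (1 <= j <= l)%N -> ~~ s j ->
  objective calQ c2 (select_stack w (fun p => s p || (p == j)) *m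
                     (select_stack w (fun p => s p || (p == j)))^T) =
  objective calQ c2 (select_stack w s *m (select_stack w s)^T) - c2 j + qform (Q j) w.
Proof.
move=> w1 s0 jl sj; rewrite !objective_select ?s0 //.
have jL : (j.-1 < l)%N by lia.
rewrite (bigD1 (Ordinal jL)) // [in RHS](bigD1 (Ordinal jL)) //=.
rewrite (_ : j.-1.+1 = j) ?eqxx ?orbT ?(negbTE sj); last by lia.
rewrite [c2 j + _]addrC addrK addrC; congr (_ + _); apply: eq_bigr => i ij.
suff -> : (i.+1 == j) = false by rewrite orbF.
by apply/eqP => ij'; move/eqP: ij; apply; apply: val_inj => /=; lia.
Qed.

Lemma sdr_tight_outer (om : 'cV[R]_(4 * l.+1)) :
  sdr_global_min calQ c2 (om *m om^T) -> sdr_tight calQ c2.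
Proof.
move=> om_gmin; have [[_ [_ [om_0i om_tr]]] om_min] := om_gmin.
exists om; split=> //; split=> [|om' [om'_0i om'_tr]]; first by split.
by apply: om_min; split; [rewrite trmx_mul trmxK | split; [exact: psd_outer | split]].
Qed.

End Relaxation.

Theorem theorem3p2 (R : realType) (l k : nat) (w0 : 'cV[R]_4)
  (y x : nat -> 'cV[R]_3) (c2 : nat -> R) (Q : nat -> 'M[R]_4)
  (calQ : 'M[R]_(4 * l.+1)) :
  unit_quat w0 ->
  (1 <= k)%N -> (k < l)%N ->
  (forall i, (1 <= i <= k)%N -> y i = rotq w0 *m x i) ->
  (forall i, (1 <= i <= l)%N -> 0 <= c2 i) ->
  (forall i, (1 <= i <= l)%N ->
     (Q i)^T = Q i /\
     forall w : 'cV[R]_4, unit_quat w ->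
       qform (Q i) w = sqnorm (y i - rotq w *m x i)) ->
  calQ^T = calQ ->
  (forall i, (1 <= i <= l)%N ->
     blk calQ 0 i = 2^-1 *: (Q i - (c2 i)%:M) /\
     blk calQ i 0 = 2^-1 *: (Q i - (c2 i)%:M)) ->
  (blk calQ 0 0 = 0 /\
   forall i j, (1 <= i <= l)%N -> (1 <= j <= l)%N -> blk calQ i j = 0) ->
  let Wstar := omega_star l k w0 *m (omega_star l k w0)^T in
  ((forall j, (k < j <= l)%N -> 0 < c2 j < lambda_min (Q j)) ->
     sdr_global_min calQ c2 Wstar /\ sdr_tight calQ c2)
  /\
  ((exists j, (k < j <= l)%N /\ qform (Q j) w0 < c2 j) ->
     ~ sdr_global_min calQ c2 Wstar).
Proof.
move=> w1 k_gt0 k_lt_l inliers c2_ge0 Q_residual _ calQ_0i calQ_else.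
have sQ i : (1 <= i <= l)%N -> (Q i)^T = Q i by case/Q_residual.
have Q_w0 i : (1 <= i <= k)%N -> qform (Q i) w0 = 0.
  move=> ik; rewrite (Q_residual i _).2 ?inliers ?subrr ?sqnorm_qform ?qform0 //; lia.
rewrite /= omega_star_select; set s := fun p => (p <= k)%N.
split=> [outliers | [j [/andP[kj jl] Qj_lt]] [_ Wstar_le]].
  have Wstar_min : sdr_global_min calQ c2 (select_stack l w0 s *m (select_stack l w0 s)^T).
    apply: (sdr_global_min_select calQ_0i calQ_else) => // i /andP[i_ge1 il] ik.
      split; last by apply: c2_ge0; rewrite i_ge1.
      - by apply: psd_sphere => w w_1; rewrite (Q_residual i _).2 ?sqnorm_ge0 ?i_ge1.
      - by apply: Q_w0; rewrite i_ge1.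
    rewrite /s -ltnNge in ik.
    have ki : (k < i <= l)%N by rewrite ik.
    by have /andP[_ /ltW] := outliers i ki.
  by split=> //; apply: sdr_tight_outer Wstar_min.
have := Wstar_le _ (@sdr_feasible_select _ l w0 (fun p => s p || (p == j)) w1 erefl).
have j_ge1 : (1 <= j <= l)%N by rewrite jl andbT (leq_trans k_gt0 (ltnW kj)).
have sj : ~~ s j by rewrite /s -ltnNge.
by rewrite (objective_select_add calQ_0i calQ_else) //; lra.
Qed.
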